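(* Let $G=(V,W,E)$ be a bipartite graph with parts $V$ and $W$ such that (1) $|N(v)|=3$ for all $v\in V$, (2) $G$ is odd, (3) $G$ is rigid, and (4) there are no distinct $w_1,w_2\in W$ with $N_G^{2}(w_1)=N_G^{2}(w_2)$. Then the graph $R(G)$ is rigid.
   Context: All graphs are finite, simple and undirected; $N(v)$ denotes the neighbourhood of $v$. A graph is rigid if its only automorphism is the identity. A bipartite graph $G=(V,W,E)$ in which every vertex of $V$ has degree $3$ is called odd if for every nonempty $X\subseteq W$ there is some $v\in V$ such that $|X\cap N(v)|$ is odd. The second neighbourhood of a vertex $v$ is $N_G^{2}(v)=\{u\in V(G): u\neq v \text{ and there is } w \text{ with } \{v,w\},\{w,u\}\in E(G)\}$. The graph $R(G)$ is defined as follows: for each $w\in W$ it has two vertices $a(w),b(w)$; for each $v\in V$, with its three neighbours listed in a fixed order $w_1,w_2,w_3$, it has four vertices $m_x(v)$, $x=(x_1,x_2,x_3)\in\{0,1\}^3$ with an even number of ones, where $m_x(v)$ is adjacent to $a(w_j)$ if $x_j=0$ and to $b(w_j)$ if $x_j=1$, for $j=1,2,3$; there are no other edges. *)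

From mathcomp Require Import all_boot.
Set Implicit Arguments. Unset Strict Implicit. Unset Printing Implicit Defensive.

(* A finite simple graph on a finType T is given by an edge relation e : rel T
   (symmetric and irreflexive; all graphs built below are so by construction). *)

Definition is_automorphism (T : finType) (e : rel T) (f : T -> T) : Prop :=
  bijective f /\ forall x y, e (f x) (f y) = e x y.

Definition rigid (T : finType) (e : rel T) : Prop :=
  forall f, is_automorphism e f -> forall x, f x = x.

Definition nbhd (T : finType) (e : rel T) (v : T) : {set T} := [set u | e v u].
Definition nbhd2 (T : finType) (e : rel T) (v : T) : {set T} :=
  [set u | (u != v) && [exists w, e v w && e w u]].

Definition bip_rel (V W : finType) (E : V -> W -> bool) : rel (V + W) :=
  fun x y => match x, y with
             | inl v, inr w => E v w
             | inr w, inl v => E v w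
             | _, _ => false
             end.

Definition odd_bip (V W : finType) (E : V -> W -> bool) : Prop :=
  forall X : {set W}, X != set0 ->
    exists v : V, odd #|X :&: [set w | E v w]|.

Definition even_vec := {x : {ffun 'I_3 -> bool} | ~~ odd #|[set j | x j]| }.

(* Vertices of R(G):  inl (w, false) = a(w),  inl (w, true) = b(w),
   inr (v, x) = m_x(v). *)
Definition RV (V W : finType) : finType := ((W * bool) + (V * even_vec))%type.

(* nb v j is the j-th neighbour w_(j+1) of v in the fixed order.
   m_x(v) ~ a(w_j) iff x_j = 0, and m_x(v) ~ b(w_j) iff x_j = 1. *)
Definition R_adj (V W : finType) (nb : V -> 'I_3 -> W) (p : W * bool) (m : V * even_vec) : bool :=
  [exists j : 'I_3, (nb m.1 j == p.1) && (val m.2 j == p.2)].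

Definition R_rel (V W : finType) (nb : V -> 'I_3 -> W) : rel (RV V W) :=
  fun x y => match x, y with
             | inl p, inr m => R_adj nb p m
             | inr m, inl p => R_adj nb p m
             | _, _ => false
             end.

From mathcomp Require Import all_boot perm.
Set Implicit Arguments. Unset Strict Implicit. Unset Printing Implicit Defensive.

(* In R(G) every m_x(v) has degree 3 while a(w) and b(w) have even degree, so an
   automorphism f preserves the two sides.  The second neighbourhood of a(w) and
   of b(w) is {a(u), b(u) | u in N^2_G(w)}, so by (4) f permutes the pairs
   {a(w), b(w)}: f(a(w)) and f(b(w)) are a(g w), b(g w) up to a twist h w.
   Since f(m_x(v)) is adjacent to one vertex over each g w, w in N(v), it is some
   m_y(v') with N(v') = g(N(v)); rigidity of G then gives g = id and v' = v, so
   y = x + h on N(v).  As x and y are both even, h meets every N(v) evenly, and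
   oddness of G forces h = 0. *)

Lemma even_card_involution (T : finType) (phi : T -> T) (S : {set T}) :
  involutive phi -> {homo phi : x / x \in S} -> {in S, forall x, phi x != x} ->
  ~~ odd #|S|.
Proof.
move=> phiK S_phi phi_neq.
have clS : fclosed phi S.
  by move=> x _ /eqP <-; apply/idP/idP => [/S_phi //|/S_phi]; rewrite phiK.
have S2 : S \subset order_set phi 2.
  apply/subsetP => x xS; rewrite inE; apply/eqP.
  apply: (@order_cycle _ _ [:: x; phi x]) => /=.
  - by rewrite phiK !eqxx.
  - by rewrite inE andbT eq_sym phi_neq.
  - exact: mem_head.
by rewrite -(fcard_order_set (can_inj phiK) S2 clS) muln2 odd_double.
Qed.

Lemma odd_card_addb (T : finType) (P Q : pred T) :
  odd #|[set x | P x (+) Q x]| = odd #|[set x | P x]| (+) odd #|[set x | Q x]|.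
Proof.
have card_sum (R : pred T) : #|[set x | R x]| = \sum_x R x.
  by rewrite -sum1_card big_mkcond; apply: eq_bigr => x _; rewrite inE.
rewrite !card_sum !(big_morph odd oddD (erefl (odd 0))) -big_split.
by apply: eq_bigr => x _; case: (P x); case: (Q x).
Qed.

Lemma zero_vec_subproof : ~~ odd #|[set j | [ffun _ : 'I_3 => false] j]|.
Proof.
by rewrite (_ : [set j | _] = set0) ?cards0 //; apply/setP => j; rewrite !inE ffunE.
Qed.

Definition zero_vec : even_vec := Sub [ffun=> false] zero_vec_subproof.

Lemma zero_vecE j : val zero_vec j = false.
Proof. by rewrite SubK ffunE. Qed.

Lemma flip_except_subproof (j : 'I_3) (x : even_vec) :
  ~~ odd #|[set k | [ffun k => (k != j) (+) val x k] k]|.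
Proof.
rewrite (_ : [set k | _] = [set k | (k != j) (+) val x k]); last first.
  by apply/setP => k; rewrite !inE ffunE.
by rewrite odd_card_addb cardsE cardC1 card_ord (negbTE (valP x)).
Qed.

Definition flip_except (j : 'I_3) (x : even_vec) : even_vec :=
  Sub [ffun k => (k != j) (+) val x k] (flip_except_subproof j x).

Lemma flip_exceptE j x k : val (flip_except j x) k = (k != j) (+) val x k.
Proof. by rewrite SubK ffunE. Qed.

Lemma flip_exceptK j : involutive (flip_except j).
Proof.
by move=> x; apply/val_inj/ffunP => k; rewrite !flip_exceptE addbA addbb.
Qed.

Lemma flip_except_neq j x : flip_except j x != x.
Proof.
have [k kj] : exists k : 'I_3, k != j.
  exists (if j == ord0 then ord_max else ord0).
  by case: (eqVneq j ord0) => [->|nj0] //; rewrite eq_sym.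
apply/eqP => /(congr1 (fun y : even_vec => val y k)).
by rewrite flip_exceptE kj; case: (val x k).
Qed.

Lemma even_vec_with (j k : 'I_3) (c d : bool) :
  j != k -> exists x : even_vec, val x j = c /\ val x k = d.
Proof.
move=> jk; exists ((if c then flip_except k else id) ((if d then flip_except j else id) zero_vec)).
by case: c; case: d; rewrite /= ?flip_exceptE ?ffunE ?eqxx ?jk // eq_sym jk.
Qed.

Section Automorphism.

Variables (T : finType) (e : rel T) (f : T -> T).
Hypothesis f_aut : is_automorphism e f.

Let f_inj : injective f := bij_inj f_aut.1.

Lemma aut_nbhd z : nbhd e (f z) = f @: nbhd e z.
Proof.
have [g fK gK] := f_aut.1.
by apply/setP => u; rewrite -[u]gK mem_imset // !inE f_aut.2.
Qed.

Lemma aut_card_nbhd z : #|nbhd e (f z)| = #|nbhd e z|.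
Proof. by rewrite aut_nbhd card_imset. Qed.

Lemma aut_nbhd2 z : nbhd2 e (f z) = f @: nbhd2 e z.
Proof.
have [g fK gK] := f_aut.1.
apply/setP => u; rewrite -[u]gK mem_imset // !inE (inj_eq f_inj); congr andb.
apply/existsP/existsP => [[y]|[y]]; last by exists (f y); rewrite !f_aut.2.
by rewrite -[y]gK !f_aut.2; exists (g y).
Qed.

Lemma aut_nbhd2_eq z1 z2 :
  (nbhd2 e (f z1) == nbhd2 e (f z2)) = (nbhd2 e z1 == nbhd2 e z2).
Proof. by rewrite !aut_nbhd2 (inj_eq (imset_inj f_inj)). Qed.

End Automorphism.

Section Bipartite.

Variables (V W : finType) (E : V -> W -> bool).
Local Notation G := (bip_rel E).

Lemma nbhd2_bip_inl v w : (inl v \in nbhd2 G (inr w)) = false.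
Proof.
by rewrite inE; apply/negbTE/nandP; right; apply/existsPn => -[?|?]; rewrite /= ?andbF.
Qed.

Lemma mem_nbhd2_bip u w :
  (inr u \in nbhd2 G (inr w)) = (u != w) && [exists v, E v w && E v u].
Proof.
rewrite inE; congr andb.
by apply/existsP/existsP => [[[v|//] ?]|[v ?]]; [exists v | exists (inl v)].
Qed.

Definition bip_map (sv : V -> V) (sw : W -> W) (z : V + W) : V + W :=
  match z with inl v => inl (sv v) | inr w => inr (sw w) end.

Lemma bip_map_aut sv sw : injective sv -> injective sw ->
  (forall v w, E (sv v) (sw w) = E v w) -> is_automorphism G (bip_map sv sw).
Proof.
move=> sv_inj sw_inj svwE; split; last by move=> [v|w] [v'|w'] /=.
by apply: injF_bij => -[v|w] [v'|w'] //= [] => [/sv_inj|/sw_inj] ->.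
Qed.

Hypothesis G_rigid : rigid G.

Lemma rigid_bip_map sv sw : injective sv -> injective sw ->
  (forall v w, E (sv v) (sw w) = E v w) -> (forall v, sv v = v) /\ (forall w, sw w = w).
Proof.
move=> sv_inj sw_inj svwE; have fix_map := G_rigid (bip_map_aut sv_inj sw_inj svwE).
by split=> [v|w]; [case: (fix_map (inl v)) | case: (fix_map (inr w))].
Qed.

Lemma rigid_bip_nbhd_inj v1 v2 : [set w | E v1 w] = [set w | E v2 w] -> v1 = v2.
Proof.
move=> /setP N12; have E12 w : E v1 w = E v2 w by have := N12 w; rewrite !inE.
have swapE v w : E (tperm v1 v2 v) w = E v w by case: tpermP => [->|->|//]; rewrite E12.
have [fix_swap _] := rigid_bip_map (@perm_inj _ (tperm v1 v2)) (@inj_id W) swapE.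
by have := fix_swap v1; rewrite tpermL.
Qed.

End Bipartite.

Section RGraph.

Variables (V W : finType) (E : V -> W -> bool) (nb : V -> 'I_3 -> W).
Hypothesis nbP : forall v, injective (nb v) /\ [set nb v j | j : 'I_3] = [set w | E v w].
Local Notation G := (bip_rel E).
Local Notation R := (R_rel nb).

Lemma nb_inj v : injective (nb v). Proof. by case: (nbP v). Qed.

Lemma E_nbP v w : reflect (exists j, nb v j = w) (E v w).
Proof.
case: (nbP v) => _ /setP /(_ w); rewrite inE => <-.
by apply: (iffP imsetP) => -[j]; [move=> _ ->|move=> <-]; exists j.
Qed.

Lemma E_nb v j : E v (nb v j).
Proof. by apply/E_nbP; exists j. Qed.

Lemma card_E v : #|[set w | E v w]| = 3.
Proof. by case: (nbP v) => nb_v_inj <-; rewrite card_imset // card_ord. Qed.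

Lemma R_adjE w c v x :
  R_adj nb (w, c) (v, x) = [exists j, (nb v j == w) && (val x j == c)].
Proof. by []. Qed.

Lemma nbhd_R_m v x : nbhd R (inr (v, x)) = [set inl (nb v j, val x j) | j : 'I_3].
Proof.
apply/setP => -[[w c]|m]; rewrite !inE /= ?R_adjE; last by apply/esym/imsetP => -[].
apply/existsP/imsetP => [[j /andP [/eqP <- /eqP <-]]|[j _ [-> ->]]].
  by exists j.
by exists j; rewrite !eqxx.
Qed.

Lemma card_nbhd_R_m v x : #|nbhd R (inr (v, x))| = 3.
Proof. by rewrite nbhd_R_m card_imset ?card_ord // => j k [/nb_inj]. Qed.

Definition nb_index v w : 'I_3 := odflt ord0 [pick j | nb v j == w].

Lemma nb_indexK v j : nb_index v (nb v j) = j.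
Proof. by rewrite /nb_index; case: pickP => [k /eqP /nb_inj //|/(_ j)]; rewrite eqxx. Qed.

(* The m-neighbours of a(w) or b(w) are paired by flipping the two coordinates
   of x that do not point to w. *)
Lemma even_card_nbhd_R_ab w c : ~~ odd #|nbhd R (inl (w, c))|.
Proof.
pose phi (z : RV V W) := if z is inr (v, x) then inr (v, flip_except (nb_index v w) x) else z.
apply: (@even_card_involution _ phi).
- by move=> [//|[v x]]; rewrite /phi flip_exceptK.
- move=> [//|[v x]]; rewrite !inE /= !R_adjE => /existsP [j /andP [/eqP nb_j /eqP x_j]].
  by apply/existsP; exists j; rewrite -nb_j nb_indexK flip_exceptE x_j !eqxx.
- move=> [p|[v x]]; rewrite inE //= => _; apply/eqP => -[].
  exact/eqP/flip_except_neq.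
Qed.

Lemma nbhd2_R_ab_inr m w c : (inr m \in nbhd2 R (inl (w, c))) = false.
Proof.
by rewrite inE; apply/negbTE/nandP; right; apply/existsPn => -[?|?]; rewrite /= ?andbF.
Qed.

Lemma mem_nbhd2_R_ab u d w c :
  (inl (u, d) \in nbhd2 R (inl (w, c))) = (inr u \in nbhd2 G (inr w)).
Proof.
rewrite mem_nbhd2_bip inE; apply/andP/andP => [[ud_wc]|[uw]].
  case/existsP => -[//|[v x]]; rewrite /= !R_adjE.
  case/andP => /existsP [j /andP [/eqP nb_j /eqP x_j]] /existsP [k /andP [/eqP nb_k /eqP x_k]].
  split; last by apply/existsP; exists v; rewrite -nb_j -nb_k !E_nb.
  apply: contraNneq ud_wc => uw; have jk : j = k by apply: (@nb_inj v); rewrite nb_j nb_k.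
  by rewrite -nb_k -x_k -jk nb_j x_j.
case/existsP => v /andP [/E_nbP [j nb_j] /E_nbP [k nb_k]].
have jk : j != k by apply: contraNneq uw => jk; rewrite -nb_j -nb_k jk.
have [x [x_j x_k]] := even_vec_with c d jk.
split; first by apply: contraNneq uw => -[->].
by apply/existsP; exists (inr (v, x)); apply/andP; split; apply/existsP;
  [exists j; rewrite nb_j x_j | exists k; rewrite nb_k x_k]; rewrite !eqxx.
Qed.

Lemma nbhd2_R_ab_bit w c c' : nbhd2 R (inl (w, c)) = nbhd2 R (inl (w, c')).
Proof. by apply/setP => -[[u d]|m]; rewrite ?mem_nbhd2_R_ab ?nbhd2_R_ab_inr. Qed.

Lemma nbhd2_R_ab_eq w1 w2 c1 c2 :
  nbhd2 R (inl (w1, c1)) = nbhd2 R (inl (w2, c2)) -> nbhd2 G (inr w1) = nbhd2 G (inr w2).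
Proof.
move=> /setP N12; apply/setP => -[v|u]; first by rewrite !nbhd2_bip_inl.
by rewrite -(mem_nbhd2_R_ab u false w1 c1) -(mem_nbhd2_R_ab u false w2 c2) N12.
Qed.

Hypothesis nbhd2_inj : forall w1 w2 : W, w1 != w2 -> nbhd2 G (inr w1) != nbhd2 G (inr w2).

Lemma nbhd2_R_ab_inj w1 w2 c1 c2 : nbhd2 R (inl (w1, c1)) = nbhd2 R (inl (w2, c2)) -> w1 = w2.
Proof.
by move=> /nbhd2_R_ab_eq N12; case: (eqVneq w1 w2) => // /nbhd2_inj; rewrite N12 eqxx.
Qed.

Variable f : RV V W -> RV V W.
Hypothesis f_aut : is_automorphism R f.

Let f_inj : injective f := bij_inj f_aut.1.

(* The fallback branches are never taken: see [aut_inl] and [aut_inr]. *)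
Definition aut_ab (p : W * bool) : W * bool := if f (inl p) is inl q then q else p.
Definition aut_m (m : V * even_vec) : V * even_vec := if f (inr m) is inr m' then m' else m.

Lemma aut_inl p : f (inl p) = inl (aut_ab p).
Proof.
rewrite /aut_ab; case f_p: (f (inl p)) => [//|[v x]].
have := aut_card_nbhd f_aut (inl p); rewrite f_p card_nbhd_R_m => deg3.
by have := even_card_nbhd_R_ab p.1 p.2; rewrite -surjective_pairing -deg3.
Qed.

Lemma aut_inr m : f (inr m) = inr (aut_m m).
Proof.
rewrite /aut_m; case f_m: (f (inr m)) => [[w c]|//].
have := even_card_nbhd_R_ab w c; rewrite -f_m aut_card_nbhd //.
by case: m {f_m} => v x; rewrite card_nbhd_R_m.
Qed.

Definition aut_W (w : W) : W := (aut_ab (w, false)).1.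
Definition twist (w : W) : bool := (aut_ab (w, false)).2.

Lemma aut_abE w c : f (inl (w, c)) = inl (aut_W w, c (+) twist w).
Proof.
rewrite aut_inl /aut_W /twist; case: c; last by rewrite -surjective_pairing.
have same_W : (aut_ab (w, true)).1 = (aut_ab (w, false)).1.
  apply: (@nbhd2_R_ab_inj _ _ (aut_ab (w, true)).2 (aut_ab (w, false)).2).
  apply/eqP; rewrite -!surjective_pairing -!aut_inl aut_nbhd2_eq //.
  exact/eqP/nbhd2_R_ab_bit.
have : aut_ab (w, true) != aut_ab (w, false).
  by apply/eqP => same; have := aut_inl (w, true); rewrite same -aut_inl => /f_inj [].
move: same_W; case: (aut_ab (w, true)) => u1 d1; case: (aut_ab (w, false)) => u2 d2 /= ->.
by case: d1; case: d2; rewrite ?eqxx.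
Qed.

Lemma aut_W_inj : injective aut_W.
Proof.
move=> w1 w2 same; apply: (@nbhd2_R_ab_inj _ _ false false); apply/eqP.
by rewrite -(aut_nbhd2_eq f_aut) !aut_abE same; apply/eqP/nbhd2_R_ab_bit.
Qed.

Lemma aut_m_adj v x j : exists k, nb (aut_m (v, x)).1 k = aut_W (nb v j) /\
  val (aut_m (v, x)).2 k = val x j (+) twist (nb v j).
Proof.
have := f_aut.2 (inl (nb v j, val x j)) (inr (v, x)).
rewrite aut_abE aut_inr /=; case: (aut_m (v, x)) => v' y; rewrite !R_adjE => adj.
have /existsP [k /andP [/eqP nb_k /eqP y_k]] : [exists k, (nb v' k == aut_W (nb v j))
    && (val y k == val x j (+) twist (nb v j))].
  by rewrite adj; apply/existsP; exists j; rewrite !eqxx.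
by exists k.
Qed.

Lemma nbhd_aut_m v x : [set w | E (aut_m (v, x)).1 w] = aut_W @: [set w | E v w].
Proof.
apply/esym/eqP; rewrite eqEcard card_imset; last exact: aut_W_inj.
rewrite !card_E leqnn andbT; apply/subsetP => _ /imsetP [w + ->]; rewrite inE => /E_nbP [j <-].
by have [k [<- _]] := aut_m_adj v x j; rewrite inE E_nb.
Qed.

Hypothesis G_rigid : rigid G.

Lemma aut_W_id w : aut_W w = w.
Proof.
pose sv v := (aut_m (v, zero_vec)).1.
have svE v w' : E (sv v) (aut_W w') = E v w'.
  have /setP/(_ (aut_W w')) := nbhd_aut_m v zero_vec.
  by rewrite inE (mem_imset _ _ aut_W_inj) inE.
have sv_inj : injective sv.
  move=> v1 v2 same; apply: (rigid_bip_nbhd_inj G_rigid); apply: (imset_inj aut_W_inj).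
  by rewrite -(nbhd_aut_m v1 zero_vec) -(nbhd_aut_m v2 zero_vec) -/(sv v1) -/(sv v2) same.
by have [_ ->] := rigid_bip_map G_rigid sv_inj aut_W_inj svE.
Qed.

Lemma aut_m_fst v x : (aut_m (v, x)).1 = v.
Proof.
apply: (rigid_bip_nbhd_inj G_rigid).
by rewrite nbhd_aut_m (eq_imset _ aut_W_id) imset_id.
Qed.

Lemma aut_m_snd v x j : val (aut_m (v, x)).2 j = val x j (+) twist (nb v j).
Proof. by have [k []] := aut_m_adj v x j; rewrite aut_m_fst aut_W_id => /nb_inj ->. Qed.

Hypothesis G_odd : odd_bip E.

Lemma twist_even v : ~~ odd #|[set w | twist w] :&: [set w | E v w]|.
Proof.
(* f maps m_0(v) to m_y(v) with y_j = twist (nb v j), and y is even. *)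
have -> : [set w | twist w] :&: [set w | E v w] = nb v @: [set j | val (aut_m (v, zero_vec)).2 j].
  apply/setP => w; rewrite !inE; apply/andP/imsetP => [[tw /E_nbP [j nb_j]]|[j]].
    by exists j; rewrite // inE aut_m_snd zero_vecE nb_j.
  by rewrite inE aut_m_snd zero_vecE => tj ->; rewrite E_nb.
by rewrite card_imset ?(valP (aut_m _).2) //; apply: nb_inj.
Qed.

Lemma twist_false w : twist w = false.
Proof.
have : [set w | twist w] == set0.
  by apply: contraT => /G_odd [v]; rewrite (negbTE (twist_even v)).
by move/eqP/setP/(_ w); rewrite !inE.
Qed.

Lemma aut_R_id z : f z = z.
Proof.
case: z => [[w c]|[v x]]; first by rewrite aut_abE aut_W_id twist_false addbF.
rewrite aut_inr [aut_m _]surjective_pairing aut_m_fst; congr (inr (v, _)).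
by apply/val_inj/ffunP => j; rewrite aut_m_snd twist_false addbF.
Qed.

End RGraph.

Theorem mainTheorem2 (V W : finType) (E : V -> W -> bool) (nb : V -> 'I_3 -> W) :
  (* (1) every v in V has exactly three neighbours *)
  (forall v : V, #|nbhd (bip_rel E) (inl v)| = 3) ->
  (* (2) G is odd *)
  odd_bip E ->
  (* (3) G is rigid *)
  rigid (bip_rel E) ->
  (* (4) distinct vertices of W have distinct second neighbourhoods *)
  (forall w1 w2 : W, w1 != w2 ->
     nbhd2 (bip_rel E) (inr w1) != nbhd2 (bip_rel E) (inr w2)) ->
  (* nb v lists the three neighbours of v in a fixed order *)
  (forall v : V, injective (nb v) /\ [set nb v j | j : 'I_3] = [set w | E v w]) ->
  rigid (R_rel nb).
Proof.
(* Hypothesis (1) is implied by the last one. *)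
move=> _ G_odd G_rigid nbhd2_inj nbP f f_aut.
exact: aut_R_id.
Qed.
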